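(* Let $N\ge 1$. For each $K\in\{0,1,\dots,N\}$ let $h_{n,K}=c_K\sum_{|\gamma|=K}h_\gamma$, where $c_K>0$ is chosen so that $\|h_{n,K}\|=1$. Then each $h_{n,K}$ is an eigenvector of $L(\mathcal{B}_N)$ with eigenvalue $2K$; the vectors $h_{n,K}$, $K=0,\dots,N$, are mutually orthogonal; and each $h_{n,K}$ is orthogonal to every Dirichlet eigenvector of $L(\mathcal{B}_N)$.
   Context: $L(\mathcal{B}_N)$ is the unnormalized Laplacian $(Lf)(v)=\sum_{w\sim v}[f(v)-f(w)]$ of the Boolean cube $\mathcal{B}_N$, whose vertex set is $\mathbb{Z}_2^N$ with $v\sim w$ iff $v-w=e_i$ for some standard basis vector $e_i$. For $\gamma\in\mathbb{Z}_2^N$, $|\gamma|$ denotes the number of coordinates of $\gamma$ equal to $1$, and $h_\gamma(v)=2^{-N/2}(-1)^{\langle v,\gamma\rangle}$ is the corresponding Hadamard vector (an eigenvector of $L(\mathcal{B}_N)$ with eigenvalue $2|\gamma|$); the $h_\gamma$ form an orthonormal basis of $\ell^2(\mathcal{B}_N)$. A Dirichlet eigenvector of $L(\mathcal{B}_N)$ is an eigenvector of $L(\mathcal{B}_N)$ vanishing at $\mathbf{0}=(0,\dots,0)$ and at $\mathbf{1}=(1,\dots,1)$. Inner products are the standard ones on $\mathbb{C}^{V}$. *)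

From HB Require Import structures.
From mathcomp Require Import all_boot all_order all_algebra all_field.
Set Implicit Arguments. Unset Strict Implicit. Unset Printing Implicit Defensive.
Import Order.TTheory GRing.Theory Num.Theory.
Local Open Scope ring_scope.

(* Vertices of the Boolean cube B_N: elements of Z_2^N, encoded as bool-valued
   finite functions on 'I_N (true = coordinate 1). Addition in Z_2 is xor. *)
Definition vertex (N : nat) := {ffun 'I_N -> bool}.

Definition vadd N (v w : vertex N) : vertex N := [ffun i => xorb (v i) (w i)].
Definition basis N (i : 'I_N) : vertex N := [ffun j => j == i].
Definition vzero N : vertex N := [ffun _ => false].
Definition vone N : vertex N := [ffun _ => true].

(* v ~ w iff v - w = e_i for some i (in Z_2, v - w = v + w) *)
Definition adj N (v w : vertex N) : bool := [exists i, vadd v w == basis i].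

Definition weight N (g : vertex N) : nat := #|[set i | g i]|.

(* <v, gamma> mod 2 is the parity of this count; (-1)^<v,gamma> *)
Definition ip_count N (v g : vertex N) : nat := #|[set i | v i && g i]|.

Definition cfun N := vertex N -> algC.

Definition laplacian N (f : cfun N) : cfun N :=
  fun v => \sum_(w | adj v w) (f v - f w).

Definition inner N (f g : cfun N) : algC := \sum_v f v * (g v)^*.
Definition vnorm N (f : cfun N) : algC := sqrtC (inner f f).

Definition hadamard N (g : vertex N) : cfun N :=
  fun v => (sqrtC (2 ^+ N))^-1 * (-1) ^+ ip_count v g.

Definition hsum N (c : algC) (K : nat) : cfun N :=
  fun v => c * \sum_(g : vertex N | weight g == K) hadamard g v.

Definition is_eigenvector N (f : cfun N) (lam : algC) : Prop :=
  (exists v, f v != 0) /\ forall v, laplacian f v = lam * f v.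

Definition dirichlet_eigenvector N (f : cfun N) : Prop :=
  (exists lam, is_eigenvector f lam) /\ f (vzero N) = 0 /\ f (vone N) = 0.

From HB Require Import structures.
From mathcomp Require Import all_boot all_order all_algebra all_field.
Import Order.TTheory GRing.Theory Num.Theory.
Set Implicit Arguments.
Unset Strict Implicit.
Local Open Scope ring_scope.

(* The Laplacian is self-adjoint and each Hadamard vector h_g is an eigenvector
   with eigenvalue 2|g|, so h_(n,K) has eigenvalue 2K and eigenvectors with
   distinct (real) eigenvalues are orthogonal. A Dirichlet eigenvector f with
   eigenvalue 2K is orthogonal to every h_g with |g| <> K, hence its inner
   product with the sum over |g| = K equals that with the sum of all h_g. The
   latter is the multiple sqrt(2^N) delta_0 of the point mass at 0, because the
   characters of Z_2^N sum to zero off the origin; so the inner product is a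
   multiple of f(0) = 0. *)

Section BooleanCube.

Variable N : nat.
Implicit Types (v w g : vertex N) (f : cfun N).

Lemma vaddC v w : vadd v w = vadd w v.
Proof. by apply/ffunP => j; rewrite !ffunE; case: (v j); case: (w j). Qed.

Lemma vaddK v w : vadd v (vadd v w) = w.
Proof. by apply/ffunP => j; rewrite !ffunE; case: (v j); case: (w j). Qed.

Lemma vaddI v : injective (vadd v).
Proof. by move=> w w' /(congr1 (vadd v)); rewrite !vaddK. Qed.

Lemma basis_inj : injective (@basis N).
Proof. by move=> i j /ffunP /(_ j); rewrite !ffunE eqxx => /eqP. Qed.

Lemma adjC v w : adj v w = adj w v.
Proof. by rewrite /adj vaddC. Qed.

Lemma sum_adj v (F : vertex N -> algC) :
  \sum_(w | adj v w) F w = \sum_i F (vadd v (basis i)).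
Proof.
have vbasis_inj : injective (fun i => vadd v (basis i)).
  by move=> i j /vaddI /basis_inj.
rewrite -(big_imset _ (in2W vbasis_inj)) /=.
apply: eq_bigl => w; apply/existsP/imsetP => [[i /eqP vw_i] | [i _ ->]].
  by exists i; rewrite // -vw_i vaddK.
by exists i; rewrite vaddK.
Qed.

Lemma ip_countC v g : ip_count v g = ip_count g v.
Proof. by apply: eq_card => j; rewrite !inE andbC. Qed.

Lemma sign_ip_count v g :
  (-1) ^+ ip_count v g = \prod_j (if v j && g j then -1 else 1) :> algC.
Proof.
rewrite /ip_count -prodr_const -big_mkcond /=.
by apply: eq_bigl => j; rewrite inE.
Qed.

Lemma sign_ip_count_flip v g i :
  (-1) ^+ ip_count v (vadd g (basis i)) =
  (if v i then -1 else 1) * (-1) ^+ ip_count v g :> algC.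
Proof.
rewrite !sign_ip_count (bigD1 i) //= [in RHS](bigD1 i) //= mulrA; congr (_ * _).
  by rewrite !ffunE eqxx; case: (v i); case: (g i); rewrite ?mulr1 ?mulrN1 ?opprK.
by apply: eq_bigr => j /negbTE ji; rewrite !ffunE ji; case: (g j).
Qed.

Lemma hadamard_flip g v i :
  hadamard g (vadd v (basis i)) = (if g i then -1 else 1) * hadamard g v.
Proof.
by rewrite /hadamard ip_countC sign_ip_count_flip [ip_count g v]ip_countC mulrCA.
Qed.

Lemma laplacian_hadamard g v :
  laplacian (hadamard g) v = (2 * weight g)%:R * hadamard g v.
Proof.
rewrite /laplacian sum_adj.
transitivity (\sum_(i | g i) hadamard g v *+ 2).
  rewrite [RHS]big_mkcond; apply: eq_bigr => i _; rewrite hadamard_flip.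
  by case: (g i); rewrite ?mul1r ?subrr // mulN1r opprK.
rewrite sumr_const -mulrnA mulr_natl /weight.
by congr (_ *+ (2 * _)); apply: eq_card => i; rewrite inE.
Qed.

Lemma laplacian_hsum c K v :
  laplacian (hsum c K) v = (2 * K)%:R * hsum c K v.
Proof.
rewrite /laplacian /hsum.
under eq_bigr do rewrite -mulrBr -sumrB.
rewrite -mulr_sumr exchange_big /= mulrCA; congr (_ * _); rewrite mulr_sumr.
by apply: eq_bigr => g /eqP <-; rewrite -laplacian_hadamard.
Qed.

Lemma sum_sign_ip_count v :
  \sum_g (-1) ^+ ip_count v g = (if v == vzero N then 2 ^+ N else 0) :> algC.
Proof.
have [-> | v_neq0] := eqVneq v (vzero N).
  transitivity (\sum_(g : vertex N) (1 : algC)).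
    apply: eq_bigr => g _; rewrite (_ : ip_count _ g = 0%N) //.
    by apply: eq_card0 => j; rewrite !inE ffunE.
  by rewrite sumr_const card_ffun card_bool card_ord natrX.
have [i vi] : exists i, v i.
  apply/existsP; apply: contraR v_neq0; rewrite negb_exists => /forallP v0.
  by apply/eqP/ffunP => j; rewrite ffunE; apply/negbTE.
set S := \sum_g _.
have S_opp : S = - S.
  rewrite {1}/S (reindex_inj (@vaddI (basis i))) /= -sumrN.
  by apply: eq_bigr => g _; rewrite vaddC sign_ip_count_flip vi mulN1r.
have: S *+ 2 == 0 by rewrite mulr2n {1}S_opp addNr.
by rewrite mulrn_eq0 => /eqP.
Qed.

Lemma sum_hadamard v :
  \sum_g hadamard g v = if v == vzero N then sqrtC (2 ^+ N) else 0.
Proof.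
rewrite /hadamard -mulr_sumr sum_sign_ip_count.
case: eqP => _; last by rewrite mulr0.
have s_neq0 : sqrtC (2 ^+ N) != 0 :> algC.
  by rewrite sqrtC_eq0 expf_neq0 ?pnatr_eq0.
by rewrite -[X in _ * X](sqrtCK (2 ^+ N)) expr2 mulrA mulVf ?mul1r.
Qed.

Lemma inner_suml (I : Type) (r : seq I) (P : pred I) (F : I -> cfun N) f :
  inner (fun v => \sum_(i <- r | P i) F i v) f =
  \sum_(i <- r | P i) inner (F i) f.
Proof.
by rewrite /inner exchange_big /=; apply: eq_bigr => v _; rewrite mulr_suml.
Qed.

Lemma innerZl a f f' : inner (fun v => a * f v) f' = a * inner f f'.
Proof. by rewrite /inner mulr_sumr; apply: eq_bigr => v _; rewrite mulrA. Qed.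

Lemma inner_laplacian f f' : inner (laplacian f) f' = inner f (laplacian f').
Proof.
rewrite /inner /laplacian.
under eq_bigr do rewrite mulr_suml.
under [RHS]eq_bigr do rewrite rmorph_sum mulr_sumr.
under eq_bigr do under eq_bigr do rewrite mulrBl.
under [RHS]eq_bigr do under eq_bigr do rewrite rmorphB mulrBr.
under eq_bigr do rewrite sumrB.
under [RHS]eq_bigr do rewrite sumrB.
rewrite !sumrB; congr (_ - _).
rewrite (exchange_big_dep xpredT) //=.
by apply: eq_bigr => v _; apply: eq_bigl => w; rewrite adjC.
Qed.

Lemma inner_eigen_eq0 f f' a b :
  (forall v, laplacian f v = a * f v) -> (forall v, laplacian f' v = b * f' v) ->
  a != b^* -> inner f f' = 0.
Proof.
move=> Lf Lf' a_neq_b.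
have Lf_inner : inner (laplacian f) f' = a * inner f f'.
  by rewrite /inner mulr_sumr; apply: eq_bigr => v _; rewrite Lf mulrA.
have Lf'_inner : inner f (laplacian f') = b^* * inner f f'.
  by rewrite /inner mulr_sumr; apply: eq_bigr => v _; rewrite Lf' rmorphM mulrCA.
have /eqP := inner_laplacian f f'; rewrite Lf_inner Lf'_inner -subr_eq0 -mulrBl.
by rewrite mulf_eq0 subr_eq0 (negbTE a_neq_b) => /eqP.
Qed.

Lemma inner_hsum c K f :
  inner (hsum c K) f = c * \sum_(g | weight g == K) inner (hadamard g) f.
Proof. by rewrite -inner_suml -innerZl. Qed.

Lemma sum_inner_hadamard f :
  \sum_g inner (hadamard g) f = sqrtC (2 ^+ N) * (f (vzero N))^*.
Proof.
rewrite -inner_suml /inner (bigD1 (vzero N)) //= sum_hadamard eqxx.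
rewrite big1 ?addr0 // => v /negbTE v_neq0.
by rewrite sum_hadamard v_neq0 mul0r.
Qed.

Lemma inner_hsum_eigen c K f lam :
  (forall v, laplacian f v = lam * f v) -> f (vzero N) = 0 ->
  inner (hsum c K) f = 0.
Proof.
move=> Lf f0; rewrite inner_hsum.
have inner_hadamard_eq0 g :
    lam^* != (2 * weight g)%:R -> inner (hadamard g) f = 0.
  move=> lam_neq; apply: inner_eigen_eq0 (laplacian_hadamard g) Lf _.
  by rewrite eq_sym.
have [lam_K | lam_neq] := eqVneq lam^* (2 * K)%:R; last first.
  by rewrite big1 ?mulr0 // => g /eqP wg; apply: inner_hadamard_eq0; rewrite wg.
rewrite big_mkcond (eq_bigr (fun g => inner (hadamard g) f)) => [|g _].
  by rewrite sum_inner_hadamard f0 conjC0 !mulr0.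
case: eqP => // /eqP wg; symmetry; apply: inner_hadamard_eq0.
by rewrite lam_K eqr_nat eqn_mul2l /= eq_sym.
Qed.

Lemma exists_neq0_vnorm f : vnorm f != 0 -> exists v, f v != 0.
Proof.
move=> nf; apply/existsP; apply: contraNT nf => /existsPn f0.
rewrite /vnorm /inner big1 ?sqrtC0 // => v _.
by move/negbNE/eqP: (f0 v) => ->; rewrite mul0r.
Qed.

End BooleanCube.

Theorem lemma3 (N : nat) (hN : (1 <= N)%N) (c : nat -> algC)
  (hc_pos : forall K, (K <= N)%N -> 0 < c K)
  (hc_norm : forall K, (K <= N)%N -> vnorm (@hsum N (c K) K) = 1) :
  (forall K, (K <= N)%N -> is_eigenvector (@hsum N (c K) K) (2 * K)%:R) /\
  (forall K K', (K <= N)%N -> (K' <= N)%N -> K <> K' ->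
     inner (@hsum N (c K) K) (@hsum N (c K') K') = 0) /\
  (forall K (f : cfun N), (K <= N)%N -> dirichlet_eigenvector f ->
     inner (@hsum N (c K) K) f = 0).
Proof.
split; [|split].
- move=> K hK; split; last exact: laplacian_hsum.
  by apply: exists_neq0_vnorm; rewrite hc_norm ?oner_neq0.
- move=> K K' _ _ /eqP K_neq_K'.
  apply: inner_eigen_eq0 (laplacian_hsum _ _) (laplacian_hsum _ _) _.
  by rewrite conjC_nat eqr_nat eqn_mul2l.
- by move=> K f _ [[lam [_ Lf]] [f0 _]]; apply: inner_hsum_eigen Lf f0.
Qed.
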